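(* Let $\theta\geq 0$ be real. If $p$ is a projector over $A(\mathbb{R}^2_\theta)$, i.e. $p\in M_n(A(\mathbb{R}^2_\theta))$ for some $n$ with $p^2=p=p^*$, then every entry of $p$ is a scalar multiple of the identity, i.e. $p$ is a projector in $M_n(\mathbb{C})$.
   Context: $A(\mathbb{R}^2_\theta)$ is the unital $*$-algebra generated by two self-adjoint elements $x,y$ with $[x,y]=xy-yx=-i\theta$; every element can be written uniquely as a finite sum $\sum a_{p,q}x^py^q$ with $a_{p,q}\in\mathbb{C}$ (ordered monomials linearly independent), and $\mathbb{C}$ is identified with the scalar multiples of $1$. *)

From HB Require Import structures.
From mathcomp Require Import all_boot all_order all_algebra.
From mathcomp Require Import reals.
From mathcomp Require Import complex.
Set Implicit Arguments. Unset Strict Implicit. Unset Printing Implicit Defensive.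
Import Order.TTheory GRing.Theory Num.Theory.
Local Open Scope ring_scope.

Definition itheta (R : rcfType) (theta : R) : R[i] := Complex 0 theta.

(* [Atheta star x y theta] : the C-algebra A (unital, with involution [star])
   is A(R^2_theta): a unital *-algebra generated by self-adjoint x, y with
   [x,y] = xy - yx = -i theta, in which the ordered monomials x^p y^q form
   a basis (linearly independent and spanning).  This determines A up to
   *-isomorphism. *)
Record Atheta (R : rcfType) (A : algType R[i]) (star : A -> A) (x y : A)
    (theta : R) : Prop := {
  star_add : forall a b : A, star (a + b) = star a + star b;
  star_scale : forall (c : R[i]) (a : A), star (c *: a) = c^* *: star a;
  star_mul : forall a b : A, star (a * b) = star b * star a;
  star_invol : forall a : A, star (star a) = a;
  star_x : star x = x;
  star_y : star y = y;
  commutator_xy : x * y - y * x = (- itheta theta)%:A;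
  monomials_free : forall (N : nat) (a : 'I_N -> 'I_N -> R[i]),
    \sum_(p < N) \sum_(q < N) a p q *: (x ^+ p * y ^+ q) = 0 ->
    forall p q, a p q = 0;
  monomials_span : forall z : A, exists (N : nat) (a : 'I_N -> 'I_N -> R[i]),
    z = \sum_(p < N) \sum_(q < N) a p q *: (x ^+ p * y ^+ q)
}.

Definition mx_star (T : Type) (star : T -> T) (n : nat) (M : 'M[T]_n) : 'M[T]_n :=
  \matrix_(i < n, j < n) star (M j i).

(* Order the monomials x^i y^j by total degree, then by the power of x.  Since
   [x, y] is a scalar, x^i y^j * x^k y^l is x^(i+k) y^(j+l) up to monomials of
   smaller x- and y-degree, and (x^i y^j)^* = y^j x^i differs from x^i y^j in
   the same way; so leading terms multiply, and conjugation conjugates leading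
   coefficients.  For a projector, p_ii = sum_k p_ik p_ik^*.  If (P, Q) <> (0, 0)
   bounds the supports of the row (p_ik)_k, the coefficient of x^2P y^2Q on the
   right is sum_k |c_k|^2, with c_k the coefficient of x^P y^Q in p_ik, while
   p_ii is supported below (P, Q).  Hence all c_k vanish, the bound descends,
   and eventually every entry is a scalar. *)

From HB Require Import structures.
From mathcomp Require Import all_boot all_order all_algebra.
From mathcomp Require Import reals complex.
From mathcomp Require Import zify.
Import Order.TTheory GRing.Theory Num.Theory.
Set Implicit Arguments.
Unset Strict Implicit.
Unset Printing Implicit Defensive.
Local Open Scope ring_scope.

Lemma sum_mul_conj_eq0 (C : numClosedFieldType) (I : finType) (a : I -> C) :
  \sum_k a k * (a k)^* = 0 -> forall k, a k = 0.
Proof.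
move=> sum0 k; apply/eqP; rewrite -normr_eq0 -sqrf_eq0 normCK; apply/eqP.
by apply: (psumr_eq0P _ sum0) => // j _; rewrite -normCK exprn_ge0.
Qed.

Lemma map_mx_fmorph_inj (F : fieldType) (B : nzRingType) (f : {rmorphism F -> B}) m n :
  injective (map_mx f : 'M_(m, n) -> 'M_(m, n)).
Proof.
move=> M N /matrixP eqMN; apply/matrixP => i j; apply: (fmorph_inj f).
by have := eqMN i j; rewrite !mxE.
Qed.

Section Support.
Variables (K : nzRingType) (V : lmodType K) (e : nat -> nat -> V).

Inductive supported (S : nat -> nat -> bool) : V -> Prop :=
| supported0 : supported S 0
| supported_e i j c : S i j -> supported S (c *: e i j)
| supportedD u v : supported S u -> supported S v -> supported S (u + v).

Lemma supported_sub (S S' : nat -> nat -> bool) u :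
  (forall i j, S i j -> S' i j) -> supported S u -> supported S' u.
Proof.
move=> SS'; elim=> [|i j c /SS' Sij|u1 u2 _ Su1 _ Su2].
- exact: supported0.
- exact: supported_e.
- exact: supportedD.
Qed.

Lemma supported_map (S S' : nat -> nat -> bool) (f : V -> V) u :
  f 0 = 0 -> {morph f : a b / a + b} ->
  (forall i j c, S i j -> supported S' (f (c *: e i j))) ->
  supported S u -> supported S' (f u).
Proof.
move=> f0 fD fe; elim=> [|i j c Sij|u1 u2 _ Su1 _ Su2].
- rewrite f0; exact: supported0.
- exact: fe.
- rewrite fD; exact: supportedD.
Qed.

Lemma supportedZ S c u : supported S u -> supported S (c *: u).
Proof.
apply: supported_map => [|a b|i j d Sij]; rewrite ?scaler0 ?scalerDr //.
by rewrite scalerA; apply: supported_e.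
Qed.

Lemma supportedB S u v : supported S u -> supported S v -> supported S (u - v).
Proof. by move=> Su Sv; rewrite -scaleN1r; apply/supportedD/supportedZ. Qed.

Lemma supported_sum S (I : finType) (F : I -> V) :
  (forall k, supported S (F k)) -> supported S (\sum_k F k).
Proof. by move=> SF; apply: big_ind => //; [apply: supported0|apply: supportedD]. Qed.

Lemma supported_split S P Q u : supported S u ->
  exists c, supported (fun i j => S i j && ((i != P) || (j != Q))) (u - c *: e P Q).
Proof.
elim=> [|i j c Sij|u1 u2 _ [a Su1] _ [b Su2]].
- by exists 0; rewrite scale0r subrr; apply: supported0.
- have [[-> ->]|neq] := eqVneq (i, j) (P, Q).
    by exists c; rewrite subrr; apply: supported0.
  exists 0; rewrite scale0r subr0; apply: supported_e.
  by rewrite Sij -negb_and; apply: contra neq => /andP[/eqP-> /eqP->].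
- by exists (a + b); rewrite scalerDl opprD addrACA; apply: supportedD.
Qed.

Hypothesis e_free : forall (N : nat) (a : 'I_N -> 'I_N -> K),
  \sum_(p < N) \sum_(q < N) a p q *: e p q = 0 -> forall p q, a p q = 0.

Definition combination N (a : nat -> nat -> K) : V :=
  \sum_(i < N) \sum_(j < N) a i j *: e i j.

Lemma combination_add N a b :
  combination N a + combination N b = combination N (fun i j => a i j + b i j).
Proof.
rewrite /combination -big_split; apply: eq_bigr => i _.
by rewrite -big_split; apply: eq_bigr => j _; rewrite scalerDl.
Qed.

Lemma combinationB N a b :
  combination N a - combination N b = combination N (fun i j => a i j - b i j).
Proof.
rewrite /combination -sumrB; apply: eq_bigr => i _.
by rewrite -sumrB; apply: eq_bigr => j _; rewrite scalerBl.
Qed.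

Lemma combination_delta N P Q c : (P < N)%N -> (Q < N)%N ->
  combination N (fun i j => if (i == P) && (j == Q) then c else 0) = c *: e P Q.
Proof.
move=> ltPN ltQN; rewrite /combination (bigD1 (Ordinal ltPN)) //=.
rewrite (bigD1 (Ordinal ltQN)) //= !eqxx /= big1 ?addr0 => [|j neqjQ].
  rewrite big1 ?addr0 // => i neqiP; apply: big1 => j _.
  by rewrite -val_eqE /= in neqiP; rewrite (negbTE neqiP) scale0r.
by rewrite -val_eqE /= in neqjQ; rewrite (negbTE neqjQ) scale0r.
Qed.

Lemma supported_combination S u : supported S u -> exists N0, forall N, (N0 <= N)%N ->
  exists a, (forall i j, a i j != 0 -> S i j) /\ u = combination N a.
Proof.
elim=> [|P Q c SPQ|u1 u2 _ [N1 Su1] _ [N2 Su2]].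
- exists 0%N => N _; exists (fun _ _ => 0); split=> [i j|]; first by rewrite eqxx.
  by rewrite /combination big1 // => i _; rewrite big1 // => j _; rewrite scale0r.
- exists (maxn P Q).+1 => N leN.
  have [ltPN ltQN] : (P < N)%N /\ (Q < N)%N by lia.
  exists (fun i j => if (i == P) && (j == Q) then c else 0).
  split; last by rewrite combination_delta.
  by move=> i j; case: ifP => [/andP[/eqP-> /eqP->]|]; rewrite ?eqxx.
- exists (maxn N1 N2) => N; rewrite geq_max => /andP[/Su1[a [Sa ->]] /Su2[b [Sb ->]]].
  exists (fun i j => a i j + b i j); split; last exact: combination_add.
  move=> i j; have [->|/Sa //] := eqVneq (a i j) 0; rewrite add0r; exact: Sb.
Qed.

Lemma supported_coef_eq0 S P Q c : supported S (c *: e P Q) -> ~~ S P Q -> c = 0.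
Proof.
move=> /supported_combination[N0 SN] notSPQ.
set N := maxn N0 (maxn P Q).+1.
have [ltPN ltQN] : (P < N)%N /\ (Q < N)%N by lia.
have [a [Sa Ea]] := SN N (leq_maxl _ _).
have aPQ : a P Q = 0 by apply/eqP; apply: contraNT notSPQ => /Sa.
pose d i j := (if (i == P) && (j == Q) then c else 0) - a i j.
have /e_free/(_ (Ordinal ltPN) (Ordinal ltQN)) : \sum_(p < N) \sum_(q < N) d p q *: e p q = 0.
  by rewrite -[LHS]/(combination N d) -combinationB combination_delta // -Ea subrr.
by rewrite /d /= !eqxx aPQ subr0.
Qed.

End Support.

Section WeylMonomials.
Variables (K : nzRingType) (A : algType K) (x y : A) (t : K).
Hypothesis yx : y * x = x * y + t%:A.

Definition mon i j : A := x ^+ i * y ^+ j.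

Lemma exprY_x b : y ^+ b * x = x * y ^+ b + (b%:R * t) *: y ^+ b.-1.
Proof.
case: b => [|b]; first by rewrite expr0 mul1r mulr1 mul0r scale0r addr0.
elim: b => [|b IHb]; first by rewrite expr1 yx expr0 mul1r.
rewrite exprS -mulrA IHb mulrDr mulrA yx mulrDl mulr_algl -scalerAr -!exprS.
by rewrite -mulrA -exprS -addrA -scalerDl [b.+2%:R]mulrS mulrDl mul1r.
Qed.

Lemma mon_x i j : mon i j * x = mon i.+1 j + (j%:R * t) *: mon i j.-1.
Proof. by rewrite /mon -mulrA exprY_x mulrDr mulrA -exprSr -scalerAr. Qed.

Lemma supported_commutator b c :
  supported mon (fun i j => (i < c) && (j < b))%N (y ^+ b * x ^+ c - x ^+ c * y ^+ b).
Proof.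
case: b => [|b]; first by rewrite expr0 mulr1 mul1r subrr; apply: supported0.
elim: c => [|c IHc]; first by rewrite expr0 mulr1 mul1r subrr; apply: supported0.
have -> : y ^+ b.+1 * x ^+ c.+1 - x ^+ c.+1 * y ^+ b.+1 =
    (y ^+ b.+1 * x ^+ c - x ^+ c * y ^+ b.+1) * x + (b.+1%:R * t) *: mon c b.
  by rewrite mulrBl -mulrA -exprSr [_ * x]mon_x opprD -addrA subrK.
apply: supportedD; last by apply: supported_e; rewrite !ltnSn.
apply: (supported_map (f := fun z => z * x)) IHc => [|u v|i j d /andP[ltic ltjb]].
- by rewrite mul0r.
- by rewrite mulrDl.
rewrite -scalerAl mon_x scalerDr scalerA.
by apply: supportedD; apply: supported_e; lia.
Qed.

Lemma supported_monM a b c d :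
  supported mon (fun i j => (i < a + c) && (j < b + d))%N
    (mon a b * mon c d - mon (a + c) (b + d)).
Proof.
have -> : mon a b * mon c d - mon (a + c) (b + d) =
    x ^+ a * (y ^+ b * x ^+ c - x ^+ c * y ^+ b) * y ^+ d.
  by rewrite /mon !exprD mulrBr mulrBl !mulrA.
apply: (supported_map (f := fun z => x ^+ a * z * y ^+ d)) (supported_commutator b c).
- by rewrite mulr0 mul0r.
- by move=> u v; rewrite mulrDr mulrDl.
move=> i j k /andP[ltic ltjb].
rewrite -scalerAr -scalerAl /mon mulrA -exprD -mulrA -exprD.
by apply: supported_e; rewrite ltn_add2l ltn_add2r ltic.
Qed.

Lemma supportedM (S1 S2 S : nat -> nat -> bool) u v :
  (forall i j k l, S1 i j -> S2 k l -> S (i + k) (j + l)) ->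
  (forall i j k l i' j', S1 i j -> S2 k l ->
     (i' < i + k)%N -> (j' < j + l)%N -> S i' j') ->
  supported mon S1 u -> supported mon S2 v -> supported mon S (u * v).
Proof.
move=> S_add S_lower Su Sv.
apply: (supported_map (f := fun z => z * v)) Su => [|a b|i j c S1ij];
  rewrite ?mul0r ?mulrDl //.
apply: (supported_map (f := fun z => c *: mon i j * z)) Sv => [|a b|k l d S2kl];
  rewrite ?mulr0 ?mulrDr //.
rewrite -scalerAl -scalerAr scalerA -[mon i j * _](subrK (mon (i + k) (j + l))).
rewrite scalerDr; apply: supportedD; last exact/supported_e/S_add.
apply/supportedZ/(supported_sub _ (supported_monM i j k l)) => i' j' /andP[].
exact: S_lower.
Qed.

End WeylMonomials.

Definition grlex_upto (P Q i j : nat) : bool :=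
  (i + j < P + Q)%N || (i + j == P + Q) && (i <= P)%N.
Definition grlex_below (P Q i j : nat) : bool :=
  (i + j < P + Q)%N || (i + j == P + Q) && (i < P)%N.

Section LeadingTerms.
Variables (K : nzRingType) (A : algType K) (x y : A) (t : K).
Hypothesis yx : y * x = x * y + t%:A.
Local Notation mon := (mon x y).

Lemma supported_upto_lead P Q u a :
  supported mon (grlex_below P Q) (u - a *: mon P Q) -> supported mon (grlex_upto P Q) u.
Proof.
move=> Su; rewrite -(subrK (a *: mon P Q) u); apply: supportedD.
  by apply: supported_sub Su => i j; rewrite /grlex_upto /grlex_below; lia.
by apply: supported_e; rewrite /grlex_upto eqxx leqnn orbT.
Qed.

Lemma supported_leadM P Q P' Q' u v a b :
  supported mon (grlex_below P Q) (u - a *: mon P Q) ->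
  supported mon (grlex_below P' Q') (v - b *: mon P' Q') ->
  supported mon (grlex_below (P + P') (Q + Q'))
    (u * v - (a * b) *: mon (P + P') (Q + Q')).
Proof.
move=> Su Sv; have Sv_upto := supported_upto_lead Sv.
have -> : u * v - (a * b) *: mon (P + P') (Q + Q') =
    (u - a *: mon P Q) * v + (a *: mon P Q * (v - b *: mon P' Q') +
    (a * b) *: (mon P Q * mon P' Q' - mon (P + P') (Q + Q'))).
  rewrite mulrBl mulrBr -!scalerAl -scalerAr scalerA scalerBr.
  by rewrite !addrA !subrK.
apply: supportedD; last apply: supportedD.
- apply: (supportedM yx _ _ Su Sv_upto) => [i j k l|i j k l i' j'];
    rewrite /grlex_below /grlex_upto; lia.
- have Sa : supported mon (grlex_upto P Q) (a *: mon P Q).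
    by apply: supported_e; rewrite /grlex_upto eqxx leqnn orbT.
  apply: (supportedM yx _ _ Sa Sv) => [i j k l|i j k l i' j'];
    rewrite /grlex_below /grlex_upto; lia.
- apply/supportedZ/(supported_sub _ (supported_monM yx P Q P' Q')) => i j.
  rewrite /grlex_below; lia.
Qed.

Lemma supported_upto00_scalar z : supported mon (grlex_upto 0 0) z -> exists c, z = c%:A.
Proof.
elim=> [|i j c|u v _ [c ->] _ [d ->]].
- by exists 0; rewrite scale0r.
- rewrite /grlex_upto => ij0; have [-> ->] : i = 0%N /\ j = 0%N by lia.
  by exists c; rewrite /mon !expr0 mulr1.
- by exists (c + d); rewrite scalerDl.
Qed.

End LeadingTerms.

Section WeylAlgebra.
Variables (R : rcfType) (A : algType R[i]) (star : A -> A) (x y : A) (theta : R).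
Hypothesis HA : Atheta star x y theta.
Local Notation mon := (mon x y).

Lemma yx_itheta : y * x = x * y + (itheta theta)%:A.
Proof.
by rewrite -[y * x](subKr (x * y)) (commutator_xy HA) scaleNr opprK addrC.
Qed.

Lemma star1 : star 1 = 1.
Proof. by have := star_mul HA (star 1) 1; rewrite mulr1 (star_invol HA) mulr1. Qed.

Lemma star_alg (c : R[i]) : star c%:A = c^*%:A.
Proof. by rewrite (star_scale HA) star1. Qed.

Lemma star_exprn z n : star z = z -> star (z ^+ n) = z ^+ n.
Proof.
move=> sz; elim: n => [|n IHn]; first by rewrite !expr0 star1.
by rewrite exprS (star_mul HA) IHn sz -exprSr exprS.
Qed.

Lemma supported_star_mon i j :
  supported mon (fun i' j' => (i' < i) && (j' < j))%N (star (mon i j) - mon i j).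
Proof.
rewrite /mon (star_mul HA) !star_exprn ?(star_x HA) ?(star_y HA) //.
exact: supported_commutator yx_itheta j i.
Qed.

Lemma supported_star (S : nat -> nat -> bool) u :
  (forall i j i' j', S i j -> (i' < i)%N -> (j' < j)%N -> S i' j') ->
  supported mon S u -> supported mon S (star u).
Proof.
move=> S_lower; apply: (supported_map (f := star)) => [|a b|i j c Sij].
- by rewrite -(scale0r (0 : A)) (star_scale HA) conjC0 !scale0r.
- exact: (star_add HA).
rewrite (star_scale HA) -(subrK (mon i j) (star (mon i j))) scalerDr.
apply: supportedD; last exact: supported_e.
apply/supportedZ/(supported_sub _ (supported_star_mon i j)) => i' j' /andP[].
exact: S_lower.
Qed.

Lemma supported_lead_star P Q u a :
  supported mon (grlex_below P Q) (u - a *: mon P Q) ->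
  supported mon (grlex_below P Q) (star u - a^* *: mon P Q).
Proof.
move=> Su.
have below_lower i j i' j' : grlex_below P Q i j -> (i' < i)%N -> (j' < j)%N ->
    grlex_below P Q i' j' by rewrite /grlex_below; lia.
have -> : star u - a^* *: mon P Q =
    star (u - a *: mon P Q) + a^* *: (star (mon P Q) - mon P Q).
  rewrite -[- (a *: _)]scaleNr (star_add HA) (star_scale HA) rmorphN scaleNr.
  by rewrite scalerBr addrA subrK.
apply: supportedD; first exact: supported_star below_lower Su.
apply/supportedZ/(supported_sub _ (supported_star_mon P Q)) => i j.
by rewrite /grlex_below; lia.
Qed.

Lemma supported_below_sum_squares n (u : 'I_n -> A) v P Q :
  (0 < P + Q)%N -> \sum_k u k * star (u k) = v ->
  supported mon (grlex_upto P Q) v ->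
  (forall k, supported mon (grlex_upto P Q) (u k)) ->
  forall k, supported mon (grlex_below P Q) (u k).
Proof.
move=> PQ_gt0 sum_v Sv Su.
have /fin_all_exists[a Sa] k :
    exists c : R[i], supported mon (grlex_below P Q) (u k - c *: mon P Q).
  have [c Sc] := supported_split P Q (Su k).
  by exists c; apply: supported_sub Sc => i j; rewrite /grlex_upto /grlex_below; lia.
set s := \sum_k a k * (a k)^*.
have Ssum : supported mon (grlex_below (P + P) (Q + Q)) (v - s *: mon (P + P) (Q + Q)).
  rewrite -sum_v scaler_suml -sumrB; apply: supported_sum => k.
  by have := supported_leadM yx_itheta (Sa k) (supported_lead_star (Sa k)).
have Ss : supported mon (grlex_below (P + P) (Q + Q)) (s *: mon (P + P) (Q + Q)).
  rewrite -[s *: _](subKr v); apply: supportedB Ssum.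
  by apply: supported_sub Sv => i j; rewrite /grlex_upto /grlex_below; lia.
have /sum_mul_conj_eq0 a0 : s = 0.
  apply: (supported_coef_eq0 (e := mon) (monomials_free HA) Ss).
  by rewrite /grlex_below ltnn eqxx ltnn.
by move=> k; have := Sa k; rewrite a0 scale0r subr0.
Qed.

Lemma sum_squares_scalar n (u : 'I_n -> A) i0 P Q :
  \sum_k u k * star (u k) = u i0 ->
  (forall k, supported mon (grlex_upto P Q) (u k)) -> forall k, exists c, u k = c%:A.
Proof.
move=> sum_u.
have step d P' Q' : (P' + Q')%N = d.+1 ->
    (forall k, supported mon (grlex_upto P' Q') (u k)) ->
    forall k, supported mon (grlex_below P' Q') (u k).
  by move=> PQd Su; apply: supported_below_sum_squares sum_u (Su i0) Su; rewrite PQd.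
suff descend d : forall P' Q', (P' + Q')%N = d ->
    (forall k, supported mon (grlex_upto P' Q') (u k)) ->
    forall k, supported mon (grlex_upto 0 0) (u k).
  by move=> Su k; apply: supported_upto00_scalar; apply: descend erefl Su k.
elim: d => [|d IHd] P' Q'.
  by move=> PQ0; have [-> ->] : P' = 0%N /\ Q' = 0%N by lia.
(* The predecessor of (P'.+1, Q') is (P', Q'.+1), that of (0, d.+1) is (d, 0). *)
elim: P' Q' => [|P' IHP] Q' PQd /(step _ _ _ PQd) Sb.
  apply: (IHd d 0%N) => [|k]; first exact: addn0.
  by apply: supported_sub (Sb k) => i j; rewrite /grlex_below /grlex_upto; lia.
apply: (IHP Q'.+1) => [|k]; first lia.
by apply: supported_sub (Sb k) => i j; rewrite /grlex_below /grlex_upto; lia.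
Qed.

Lemma exists_supported_upto (I : finType) (u : I -> A) :
  exists P, forall k, supported mon (grlex_upto P 0) (u k).
Proof.
have /fin_all_exists[N SN] k : exists N, supported mon (grlex_upto N 0) (u k).
  have [N [a ->]] := monomials_span HA (u k).
  exists (N + N)%N; apply: supported_sum => p; apply: supported_sum => q.
  by apply: supported_e; rewrite /grlex_upto; have := ltn_ord p; have := ltn_ord q; lia.
exists (\max_k N k) => k; apply: supported_sub (SN k) => i j.
by have := leq_bigmax k (F := N); rewrite /grlex_upto; lia.
Qed.

Lemma projector_entry_scalar n (p : 'M[A]_n) :
  p *m p = p -> mx_star star p = p -> forall i k, exists c, p i k = c%:A.
Proof.
move=> pp ps i.
have star_p j k : star (p j k) = p k j by rewrite -[in RHS]ps mxE.
have sum_row : \sum_k p i k * star (p i k) = p i i.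
  by rewrite -[in RHS]pp mxE; apply: eq_bigr => k _; rewrite star_p.
have [P SP] := exists_supported_upto (p i).
exact: sum_squares_scalar sum_row SP.
Qed.

Lemma mx_star_alg n (q : 'M[R[i]]_n) :
  mx_star star (map_mx (GRing.in_alg A) q) = map_mx (GRing.in_alg A) (mx_star Num.conj q).
Proof. by apply/matrixP => i j; rewrite !mxE star_alg. Qed.

End WeylAlgebra.

Theorem theorem2p3 (R : realType) (theta : R) (A : algType R[i])
    (star : A -> A) (x y : A) :
  0 <= theta -> Atheta star x y theta ->
  forall (n : nat) (p : 'M[A]_n),
    p *m p = p -> mx_star star p = p ->
    exists q : 'M[R[i]]_n,
      p = map_mx (fun c : R[i] => c%:A) q /\
      q *m q = q /\ mx_star (fun c : R[i] => c^*) q = q.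
Proof.
move=> _ HA n p pp ps.
have [q Eq] : exists q : 'M[R[i]]_n, p = map_mx (GRing.in_alg A) q.
  have [f Ef] := fin_all_exists (fun i => fin_all_exists (projector_entry_scalar HA pp ps i)).
  by exists (\matrix_(i, k) f i k); apply/matrixP => i k; rewrite !mxE Ef.
have alg_inj := map_mx_fmorph_inj (f := GRing.in_alg A) (m := n) (n := n).
exists q; split; first exact: Eq.
split; apply: alg_inj; first by rewrite map_mxM -Eq.
by rewrite -(mx_star_alg HA) -Eq.
Qed.
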